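(* Suppose that every Lipschitz quaternion $(a,b,c,d)=a+bi+cj+dk$ with integer coordinates all $>1$ can be written as $p+q$ where $p$ and $q$ are Hurwitz primes lying in $Q=\{(a,b,c,d): a,b,c,d>0\}$. Then at least one of the sequences $k^2+k+1$ $(k=0,1,2,\dots)$ and $k^2+k+3$ $(k=0,1,2,\dots)$ contains infinitely many rational primes.
   Context: Quaternions $a+bi+cj+dk$ are written $(a,b,c,d)$, with norm $N(a,b,c,d)=a^2+b^2+c^2+d^2$. Lipschitz integers are quaternions $(a,b,c,d)$ with $a,b,c,d\in\mathbb{Z}$. Hurwitz integers (in the sense of this paper) are quaternions of the form $(a+\tfrac12,b+\tfrac12,c+\tfrac12,d+\tfrac12)$ with $a,b,c,d\in\mathbb{Z}$ (all four coordinates half-odd-integers). A quaternion prime is a Lipschitz or Hurwitz integer whose norm is a rational prime; a Hurwitz prime is a quaternion prime that is a Hurwitz integer. $Q$ denotes the set of quaternions with all four coordinates strictly positive. *)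

From HB Require Import structures.
From mathcomp Require Import all_boot all_order all_algebra.
Set Implicit Arguments. Unset Strict Implicit. Unset Printing Implicit Defensive.
Import Order.TTheory GRing.Theory Num.Theory.
Local Open Scope ring_scope.

(* a + bi + cj + dk written (a,b,c,d) *)
Record quat := Quat { qa : rat; qb : rat; qc : rat; qd : rat }.

Definition qadd (p q : quat) : quat :=
  Quat (qa p + qa q) (qb p + qb q) (qc p + qc q) (qd p + qd q).

Definition qnorm (q : quat) : rat :=
  qa q ^+ 2 + qb q ^+ 2 + qc q ^+ 2 + qd q ^+ 2.

Definition is_integer (x : rat) : Prop := exists z : int, x = z%:~R.
Definition is_half_odd (x : rat) : Prop := exists z : int, x = z%:~R + 2%:R^-1.

Definition lipschitz (q : quat) : Prop :=
  [/\ is_integer (qa q), is_integer (qb q), is_integer (qc q) & is_integer (qd q)].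

(* Hurwitz integers (paper's sense): all coordinates half-odd integers *)
Definition hurwitz (q : quat) : Prop :=
  [/\ is_half_odd (qa q), is_half_odd (qb q), is_half_odd (qc q) & is_half_odd (qd q)].

Definition quat_prime (q : quat) : Prop :=
  (lipschitz q \/ hurwitz q) /\ exists p : nat, prime p /\ qnorm q = p%:R.

Definition hurwitz_prime (q : quat) : Prop := quat_prime q /\ hurwitz q.

Definition inQ (q : quat) : Prop := [/\ 0 < qa q, 0 < qb q, 0 < qc q & 0 < qd q].

Definition infinitely_many_prime_terms (f : nat -> nat) : Prop :=
  forall n : nat, exists k : nat, (n <= k)%N /\ prime (f k).

(** A Hurwitz prime in Q is (x, u, v, w) + (1/2, 1/2, 1/2, 1/2) with natural
    x, u, v, w, and its norm is x^2 + x + u^2 + u + v^2 + v + w^2 + w + 1.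
    Apply the hypothesis to (M + 1, 2, 2, 2): the summands are (x, u, v, w) and
    (y, 1 - u, 1 - v, 1 - w) shifted by 1/2 with x + y = M, so for s = u + v + w
    their norms are x^2 + x + 2s + 1 and y^2 + y + 7 - 2s.  One of them is thus
    z^2 + z + c with c in {1, 3} and the other t^2 + t + (8 - c), z + t = M.
    If both sequences had finitely many primes, say none beyond K, then z < K,
    and taking M = (K^2 + 7)! makes g = z^2 - z + (8 - c) divide z + t, hence
    t^2 + t + (8 - c) since t = -z mod g; as 1 < g and z < t, the second norm
    is composite. *)
From HB Require Import structures.
From mathcomp Require Import all_boot all_order all_algebra.
From mathcomp Require Import zify ring lra.
From Stdlib Require Import Classical.
Import Order.TTheory GRing.Theory Num.Theory.

Lemma dvdn_sqr_add_shift (z t c : nat) :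
  (z ^ 2 - z + c %| z + t) -> (z ^ 2 - z + c %| t ^ 2 + t + c).
Proof.
move=> dvd_g.
have shift : (t ^ 2 + t + c) + 2 * z * (z + t) = (z + t) * (z + t).+1 + (z ^ 2 - z + c).
  by case: z {dvd_g} => [|z]; rewrite ?subn1 /=; nia.
have : z ^ 2 - z + c %| (z + t) * (z + t).+1 + (z ^ 2 - z + c).
  by rewrite dvdn_add // dvdn_mulr.
by rewrite -shift (dvdn_addl _ (dvdn_mull _ dvd_g)).
Qed.

Lemma sqr_add_shift_not_prime (z t c : nat) : 1 < c -> z < t ->
  (z ^ 2 - z + c %| z + t) -> ~~ prime (t ^ 2 + t + c).
Proof.
move=> c_gt1 lt_zt /dvdn_sqr_add_shift dvd_g; apply/negP => /primeP [_ prime_div].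
by case/orP: (prime_div _ dvd_g) => /eqP; case: z lt_zt {dvd_g} => [|z]; rewrite ?subn1 /=; nia.
Qed.

Lemma eventually_not_prime (f : nat -> nat) : ~ infinitely_many_prime_terms f ->
  exists K, forall k, K <= k -> ~~ prime (f k).
Proof.
move=> /not_all_ex_not [K no_prime]; exists K => k le_Kk; apply/negP => prime_fk.
by apply: no_prime; exists k.
Qed.

Section FinitelyManyPrimes.

Variable K : nat.
Hypothesis sqr1_not_prime : forall k, K <= k -> ~~ prime (k ^ 2 + k + 1).
Hypothesis sqr3_not_prime : forall k, K <= k -> ~~ prime (k ^ 2 + k + 3).

Let M := (K * K + 7)`!.

Lemma sqr_sub_small_dvdn_modulus (z c : nat) : z < K -> 0 < c <= 7 ->
  z ^ 2 - z + c %| M.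
Proof. by move=> lt_zK c_bnd; apply: dvdn_fact; case: z lt_zK => [|z]; rewrite ?subn1 /=; nia. Qed.

Lemma sqr_add_pair_not_prime (z t c : nat) : c = 1 \/ c = 3 -> z + t = M ->
  prime (z ^ 2 + z + c) -> ~~ prime (t ^ 2 + t + (8 - c)).
Proof.
move=> c13 sum_zt prime_z.
have [le_Kz|lt_zK] := leqP K z.
  by case: c13 prime_z => -> prime_z;
    [move: (sqr1_not_prime _ le_Kz) | move: (sqr3_not_prime _ le_Kz)]; rewrite prime_z.
have c_gt1 : 1 < 8 - c by case: c13 => ->.
have lt_zt : z < t by move: (fact_geq (K * K + 7)); rewrite -/M; nia.
apply: (@sqr_add_shift_not_prime z t (8 - c) c_gt1 lt_zt _).
by rewrite sum_zt sqr_sub_small_dvdn_modulus //; case: c13 => ->.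
Qed.

Lemma sqr_add_odd_pair_not_prime (x y s : nat) : s <= 3 -> x + y = M ->
  prime (x ^ 2 + x + (2 * s + 1)) -> ~~ prime (y ^ 2 + y + (7 - 2 * s)).
Proof.
move=> s_le3 sum_xy.
have sum_yx : y + x = M by rewrite addnC.
case: s s_le3 => [|[|[|[|//]]]] _ /=.
- exact: (@sqr_add_pair_not_prime x y 1 (or_introl erefl)).
- exact: (@sqr_add_pair_not_prime x y 3 (or_intror erefl)).
- by apply: contraL => /(@sqr_add_pair_not_prime y x 3 (or_intror erefl) sum_yx).
- by apply: contraL => /(@sqr_add_pair_not_prime y x 1 (or_introl erefl) sum_yx).
Qed.

End FinitelyManyPrimes.

Local Open Scope ring_scope.

Definition halfq (n : nat) : rat := n%:R + 2^-1.

Definition hquat (x u v w : nat) : quat := Quat (halfq x) (halfq u) (halfq v) (halfq w).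

Definition hnorm (x u v w : nat) : nat :=
  (x ^ 2 + x + (u ^ 2 + u) + (v ^ 2 + v) + (w ^ 2 + w) + 1)%N.

Lemma half_odd_gt0_halfq (r : rat) : is_half_odd r -> 0 < r -> exists n, r = halfq n.
Proof.
case=> [[n|n] ->] r_gt0; first by exists n.
have : 1 <= n.+1%:R :> rat by rewrite ler1n.
by move: r_gt0; rewrite NegzE mulrNz /=; lra.
Qed.

Lemma hurwitz_inQ_hquat (p : quat) : hurwitz p -> inQ p ->
  exists x u v w, p = hquat x u v w.
Proof.
case: p => a b c d [/= ha hb hc hd] [/= a_gt0 b_gt0 c_gt0 d_gt0].
have [x ->] := half_odd_gt0_halfq _ ha a_gt0; have [u ->] := half_odd_gt0_halfq _ hb b_gt0.
have [v ->] := half_odd_gt0_halfq _ hc c_gt0; have [w ->] := half_odd_gt0_halfq _ hd d_gt0.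
by exists x, u, v, w.
Qed.

Lemma qnorm_hquat (x u v w : nat) : qnorm (hquat x u v w) = (hnorm x u v w)%:R.
Proof. by rewrite /qnorm /hnorm /= /halfq !natrD !natrX; field. Qed.

Lemma halfqD_nat (n m t : nat) : t%:R = halfq n + halfq m -> (n + m).+1 = t.
Proof.
rewrite /halfq => sum_nm; apply/eqP; rewrite -(eqr_nat rat) -addn1 !natrD.
by apply/eqP; move: sum_nm; lra.
Qed.

Lemma hnorm_bits (x u v w : nat) : (u <= 1)%N -> (v <= 1)%N -> (w <= 1)%N ->
  hnorm x u v w = (x ^ 2 + x + (2 * (u + v + w) + 1))%N.
Proof.
have bit b : (b <= 1)%N -> (b ^ 2 + b = 2 * b)%N by case: b => [|[|]].
by move=> /bit u_bit /bit v_bit /bit w_bit; rewrite /hnorm u_bit v_bit w_bit; lia.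
Qed.

Lemma hurwitz_prime_hnorm (x u v w : nat) :
  hurwitz_prime (hquat x u v w) -> prime (hnorm x u v w).
Proof.
case=> [[_ [n [prime_n norm_n]]] _]; move: norm_n.
by rewrite qnorm_hquat => /eqP; rewrite eqr_nat => /eqP ->.
Qed.

Theorem mainTheorem3 :
  (forall a b c d : int, 1 < a -> 1 < b -> 1 < c -> 1 < d ->
     exists p q : quat,
       [/\ hurwitz_prime p, inQ p, hurwitz_prime q, inQ q &
           Quat a%:~R b%:~R c%:~R d%:~R = qadd p q]) ->
  infinitely_many_prime_terms (fun k => (k ^ 2 + k + 1)%N) \/
  infinitely_many_prime_terms (fun k => (k ^ 2 + k + 3)%N).
Proof.
move=> decomp; apply: NNPP => /not_or_and [].
move=> /eventually_not_prime [K1 sparse1] /eventually_not_prime [K3 sparse3].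
pose K := maxn K1 K3; pose M := (K * K + 7)`!.
have M_gt1 : 1 < M.+1 :> int by rewrite ltz_nat ltnS fact_gt0.
have [p [q [prime_p p_inQ prime_q q_inQ sum_pq]]] := decomp _ 2 2 2 M_gt1 erefl erefl erefl.
have [x [u [v [w p_def]]]] := hurwitz_inQ_hquat _ prime_p.2 p_inQ.
have [y [u' [v' [w' q_def]]]] := hurwitz_inQ_hquat _ prime_q.2 q_inQ.
subst p q; move: prime_p prime_q => /hurwitz_prime_hnorm + /hurwitz_prime_hnorm.
case: sum_pq => /halfqD_nat sum_xy /halfqD_nat sum_u /halfqD_nat sum_v /halfqD_nat sum_w.
rewrite !hnorm_bits; try lia.
rewrite (_ : (2 * (u' + v' + w') + 1 = 7 - 2 * (u + v + w))%N); last by lia.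
move=> prime_p; apply/negP; apply: (@sqr_add_odd_pair_not_prime K _ _ x y (u + v + w) _ _ prime_p).
- by move=> k /(leq_trans (leq_maxl _ _)); apply: sparse1.
- by move=> k /(leq_trans (leq_maxr _ _)); apply: sparse3.
- by lia.
- by case: sum_xy.
Qed.
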